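(* For all $\rho,\omega\in\mathcal{S}(\mathbb{C}^2)$ one has $D_z^2(\rho,\omega)\le 2-2(\mathbf{b}_\rho)_3(\mathbf{b}_\omega)_3\le 4$. Moreover, $D_z(\rho,\omega)=2$ holds if and only if $\{\rho,\omega\}=\{\tfrac12(I+\sigma_z),\tfrac12(I-\sigma_z)\}$. In particular the diameter of $\mathcal{S}(\mathbb{C}^2)$ with respect to $D_z$ equals $2$.
   Context: Let $\mathcal{H}=\mathbb{C}^2$, $\mathcal{H}^*$ its dual space, and $\mathcal{S}(\mathcal{H})$ the set of density operators on $\mathcal{H}$. For a linear operator $A$ on $\mathcal{H}$, its transpose $A^T$ is the operator on $\mathcal{H}^*$ defined by $(A^T\varphi)(x)=\varphi(Ax)$. $\mathcal{C}(\rho,\omega)=\{\Pi\in\mathcal{S}(\mathcal{H}\otimes\mathcal{H}^* ):\ \mathrm{tr}_{\mathcal{H}^*}[\Pi]=\omega,\ \mathrm{tr}_{\mathcal{H}}[\Pi]=\rho^T\}$. The Pauli matrices are $\sigma_1=\begin{bmatrix}0&1\\1&0\end{bmatrix}$, $\sigma_2=\begin{bmatrix}0&-i\\i&0\end{bmatrix}$, $\sigma_3=\sigma_z=\begin{bmatrix}1&0\\0&-1\end{bmatrix}$. $C_z=(\sigma_z\otimes I^T-I\otimes\sigma_z^T)^2$ and $D_z^2(\rho,\omega)=\inf\{\mathrm{tr}[\Pi C_z]:\Pi\in\mathcal{C}(\rho,\omega)\}$. The Bloch vector of $\rho$ is $\mathbf{b}_\rho=(\mathrm{tr}[\sigma_j\rho])_{j=1}^3$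 and $(\mathbf{b}_\rho)_3$ is its third coordinate. *)

From HB Require Import structures.
From mathcomp Require Import all_boot all_order all_algebra.
From mathcomp Require Import all_classical all_reals.
From mathcomp Require Import complex mxtens.
Set Implicit Arguments. Unset Strict Implicit. Unset Printing Implicit Defensive.
Import Order.TTheory GRing.Theory Num.Theory.
Local Open Scope ring_scope.
Local Open Scope classical_set_scope.

Section QDefs.
Variable R : realType.
Local Notation C := (R[i]).

Definition adjmx {m n} (A : 'M[C]_(m, n)) : 'M[C]_(n, m) :=
  map_mx (fun z => z^*) A^T.

(* positive semidefinite: <v, A v> >= 0 for all v (in C, 0 <= z means z real, nonneg) *)
Definition psd {n} (A : 'M[C]_n) : Prop :=
  forall v : 'cV[C]_n, 0 <= (adjmx v *m A *m v) 0 0.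

Definition density {n} (A : 'M[C]_n) : Prop := psd A /\ \tr A = 1.

(* H (x) H^* is identified with C^(2*2) (H^* ~ C^2 via the dual basis, so the
   transpose A^T of the context is the matrix transpose); the first tensor
   factor is H, the second is H^*; Kronecker product is mxtens's  *t . *)
Definition ptr2 (P : 'M[C]_(2 * 2)) : 'M[C]_2 :=
  \matrix_(i, k) \sum_(j < 2) P (mxtens_index (i, j)) (mxtens_index (k, j)).
Definition ptr1 (P : 'M[C]_(2 * 2)) : 'M[C]_2 :=
  \matrix_(j, l) \sum_(i < 2) P (mxtens_index (i, j)) (mxtens_index (i, l)).

Definition couplings (rho omega : 'M[C]_2) : set 'M[C]_(2 * 2) :=
  [set P | density P /\ ptr2 P = omega /\ ptr1 P = rho^T].

Definition sigma_z : 'M[C]_2 := \matrix_(i, j) (if i == j then (if i == 0 then 1 else -1) else 0).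

Definition Cz : 'M[C]_(2 * 2) :=
  let X := (sigma_z *t (1%:M : 'M[C]_2)^T) - ((1%:M : 'M[C]_2) *t sigma_z^T) in X *m X.

(* D_z^2(rho, omega) = inf { tr[Pi C_z] : Pi in C(rho, omega) } (tr is real there) *)
Definition Dz2 (rho omega : 'M[C]_2) : R :=
  inf [set @complex.Re R (\tr (P *m Cz)) | P in couplings rho omega].

Definition Dz (rho omega : 'M[C]_2) : R := Num.sqrt (Dz2 rho omega).

Definition bloch3 (rho : 'M[C]_2) : R := @complex.Re R (\tr (sigma_z *m rho)).

Definition proj_up : 'M[C]_2 := 2^-1 *: (1%:M + sigma_z).
Definition proj_down : 'M[C]_2 := 2^-1 *: (1%:M - sigma_z).

End QDefs.

From HB Require Import structures.
From mathcomp Require Import all_boot all_order all_algebra.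
From mathcomp Require Import all_classical all_reals.
From mathcomp Require Import complex mxtens.
From mathcomp Require Import ring lra.
Import Order.TTheory GRing.Theory Num.Theory.
Set Implicit Arguments. Unset Strict Implicit. Unset Printing Implicit Defensive.
Local Open Scope ring_scope.
Local Open Scope classical_set_scope.

(* In the product basis of C^2 (x) C^2 the cost C_z is diagonal, with entry 4 on
   |01> and |10> and 0 on |00> and |11>.  Writing a, b for the populations of |0>
   in omega and rho, the marginal conditions then give tr[Pi C_z] = 4 (a + b - 2 p)
   for every coupling Pi, where 0 <= p := Pi_{00,00} <= min(a, b).  The product
   coupling omega (x) rho^T has p = a b, which yields the bound
   4 (a + b - 2 a b) = 2 - 2 (b_rho)_3 (b_omega)_3 <= 4.  Equality D_z = 2 forces
   (b_rho)_3 (b_omega)_3 = -1, i.e. {a, b} = {0, 1}; conversely then p = 0 for every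
   coupling, so D_z^2 = 4, and positivity kills the coherences, leaving the two
   eigenprojections of sigma_z.  Positivity of omega (x) rho^T is reduced, for a 2x2
   second factor, to a Schur-complement estimate. *)

Section Qubit.
Variable R : realType.
Local Notation C := R[i].

Lemma ord2P (i : 'I_2) : i = 0 \/ i = 1.
Proof. by case: i => [[|[|//]] ?]; [left|right]; apply: val_inj. Qed.

Lemma sum_ord2 (F : 'I_2 -> C) : \sum_(i < 2) F i = F 0 + F 1.
Proof. by rewrite !big_ord_recl big_ord0 addr0; congr (F _ + F _); apply: val_inj. Qed.

Lemma sum_mxtens_index m n (F : 'I_(m * n) -> C) :
  \sum_(p < m * n) F p = \sum_(i < m) \sum_(j < n) F (mxtens_index (i, j)).
Proof.
rewrite pair_big /= (reindex (@mxtens_index m n)); first by apply: eq_bigr => -[].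
by exists (@mxtens_unindex m n) => x _; rewrite (mxtens_indexK, mxtens_unindexK).
Qed.

Lemma mx2_eq (A B : 'M[C]_2) :
  A 0 0 = B 0 0 -> A 0 1 = B 0 1 -> A 1 0 = B 1 0 -> A 1 1 = B 1 1 -> A = B.
Proof.
move=> e00 e01 e10 e11; apply/matrixP => i j.
by case: (ord2P i) => ->; case: (ord2P j) => ->.
Qed.

Lemma adjmxM m n p (A : 'M[C]_(m, n)) (B : 'M[C]_(n, p)) :
  adjmx (A *m B) = adjmx B *m adjmx A.
Proof. by rewrite /adjmx trmx_mul map_mxM. Qed.

Lemma quad_formE n (A : 'M[C]_n) (v : 'cV[C]_n) :
  (adjmx v *m A *m v) 0 0 = \sum_p \sum_q (v p 0)^* * A p q * v q 0.
Proof.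
rewrite mxE exchange_big /=; apply: eq_bigr => q _.
by rewrite mxE mulr_suml; apply: eq_bigr => p _; rewrite !mxE.
Qed.

Lemma psd_adjmx_conj n m (A : 'M[C]_n) (X : 'M[C]_(n, m)) :
  psd A -> psd (adjmx X *m A *m X).
Proof. by move=> hA v; have := hA (X *m v); rewrite adjmxM !mulmxA. Qed.

Lemma psd_trmx n (A : 'M[C]_n) : psd A -> psd A^T.
Proof.
move=> hA v; set w := map_mx conjc v.
have -> : adjmx v *m A^T *m v = (adjmx w *m A *m w)^T.
  rewrite !trmx_mul mulmxA; congr (_ *m _ *m _).
  1,2: by apply/matrixP => i j; rewrite !mxE ?conjCK.
by rewrite mxE; apply: hA.
Qed.

Lemma psd_diag_ge0 n (A : 'M[C]_n) i : psd A -> 0 <= A i i.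
Proof.
move=> /(_ (delta_mx i 0)); rewrite (_ : adjmx _ = delta_mx 0 i).
  by rewrite -rowE -colE !mxE.
by apply/matrixP => j k; rewrite !mxE conjC_nat andbC.
Qed.

Lemma quad_form_tensmx m n (A : 'M[C]_m) (B : 'M[C]_n) (v : 'cV[C]_(m * n)) :
  let X := \matrix_(i, j) v (mxtens_index (i, j)) 0 in
  (adjmx v *m (A *t B) *m v) 0 0 = \sum_j \sum_l B j l * (adjmx X *m A *m X) j l.
Proof.
move=> X; rewrite quad_formE sum_mxtens_index.
under eq_bigr do under eq_bigr do rewrite sum_mxtens_index.
rewrite exchange_big; apply: eq_bigr => j _.
rewrite exchange_big; under eq_bigr do rewrite exchange_big.
rewrite exchange_big; apply: eq_bigr => l _.
rewrite mxE mulr_sumr; apply: eq_bigr => k _.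
rewrite mxE mulr_suml mulr_sumr; apply: eq_bigr => i _.
by rewrite tensmxE !mxE; ring.
Qed.

Lemma psd2_quad (A : 'M[C]_2) x y : psd A ->
  0 <= x^* * A 0 0 * x + x^* * A 0 1 * y + (y^* * A 1 0 * x + y^* * A 1 1 * y).
Proof.
by move=> /(_ (\col_i (if i == 0 then x else y))); rewrite quad_formE !sum_ord2 !mxE.
Qed.

Lemma psd2_diag_ge0 (A : 'M[C]_2) : psd A -> 0 <= A 0 0 /\ 0 <= A 1 1.
Proof.
move=> hA; have := psd2_quad 1 0 hA; have := psd2_quad 0 1 hA.
by rewrite conjC0 conjC1 !(mul0r, mulr0, mul1r, mulr1, addr0, add0r).
Qed.

Lemma psd2_adj (A : 'M[C]_2) : psd A -> A 1 0 = (A 0 1)^*.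
Proof.
move=> hA; have [ha hd] := psd2_diag_ge0 hA.
have h1 := psd2_quad 1 1 hA; have hi := psd2_quad 1 (Complex 0 1) hA.
move: (A 0 0) (A 0 1) (A 1 0) (A 1 1) ha hd h1 hi => [a1 a2] [b1 b2] [c1 c2] [d1 d2].
rewrite !lecE /= => /andP[/eqP a20 _] /andP[/eqP d20 _] /andP[/eqP e1 _] /andP[/eqP e2 _].
apply/eqP; rewrite eq_complex /=; apply/andP; split; apply/eqP; lra.
Qed.

Lemma psd2_det (A : 'M[C]_2) : psd A -> A 0 1 * A 1 0 <= A 0 0 * A 1 1.
Proof.
move=> hA; have [ha hd] := psd2_diag_ge0 hA; have hc := psd2_adj hA.
have ra : (A 0 0)^* = A 0 0 by apply: conj_Creal; apply: ger0_real.
have rd : (A 1 1)^* = A 1 1 by apply: conj_Creal; apply: ger0_real.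
have [a0|a0] := eqVneq (A 0 0) 0.
  have := psd2_quad (A 1 1 + 1) (- A 1 0) hA.
  rewrite rmorphD rmorphN rmorph1 /= rd hc conjCK a0 mul0r.
  rewrite (_ : _ + _ = (A 1 1 + 2) * - (A 0 1 * (A 0 1)^*)); last by ring.
  rewrite pmulr_rge0 ?oppr_ge0 //.
  by apply: ltr_wpDl hd _.
have := psd2_quad (- A 0 1) (A 0 0) hA.
rewrite rmorphN /= -hc ra.
rewrite (_ : _ + _ = A 0 0 * (A 0 0 * A 1 1 - A 0 1 * A 1 0)); last by ring.
by rewrite pmulr_rge0 ?lt_def ?a0 // subr_ge0.
Qed.

Lemma psd2_offdiag_eq0 (A : 'M[C]_2) : psd A -> A 0 0 * A 1 1 = 0 -> A 0 1 = 0.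
Proof.
move=> hA hdiag; have := psd2_det hA; rewrite hdiag psd2_adj // => hle.
by apply/eqP; rewrite -mul_conjC_eq0 eq_le hle mul_conjC_ge0.
Qed.

Lemma psd2_pairing_ge0 (B G : 'M[C]_2) : psd B -> psd G ->
  0 <= \sum_j \sum_l B j l * G j l.
Proof.
move=> hB hG; rewrite !sum_ord2; set pairing := (X in 0 <= X).
have [hb0 hb1] := psd2_diag_ge0 hB; have [_ hg1] := psd2_diag_ge0 hG.
have hc := psd2_adj hB.
have [b0|b0] := eqVneq (B 0 0) 0.
  have e01 : B 0 1 = 0 by apply: psd2_offdiag_eq0 => //; rewrite b0 mul0r.
  by rewrite /pairing hc e01 b0 conjC0 !mul0r !add0r mulr_ge0.
have rb : (B 0 0)^* = B 0 0 by apply: conj_Creal; apply: ger0_real.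
have hdet : 0 <= B 0 0 * B 1 1 - B 0 1 * B 1 0 by rewrite subr_ge0 psd2_det.
(* Schur complement: [B 0 0 * pairing] is the [G]-form at [(B 0 0, B 0 1)] plus [det B * G 1 1]. *)
have := addr_ge0 (mulr_ge0 hdet hg1) (psd2_quad (B 0 0) (B 0 1) hG).
rewrite rb -hc [X in 0 <= X](_ : _ = B 0 0 * pairing); last by rewrite /pairing; ring.
by rewrite pmulr_rge0 // lt_def b0.
Qed.

Lemma psd_tensmx m (A : 'M[C]_m) (B : 'M[C]_2) : psd A -> psd B -> psd (A *t B).
Proof.
by move=> hA hB v; rewrite quad_form_tensmx; apply: psd2_pairing_ge0 (psd_adjmx_conj _ hA).
Qed.

Lemma ge0_complexE (z : C) : 0 <= z -> z = ((complex.Re z)%:C)%C /\ 0 <= complex.Re z.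
Proof. by case: z => a b; rewrite lecE /= => /andP[/eqP -> h]. Qed.

Lemma mxtrace2 (A : 'M[C]_2) : \tr A = A 0 0 + A 1 1.
Proof. exact: sum_ord2. Qed.

Lemma bloch3E (rho : 'M[C]_2) : bloch3 rho = complex.Re (rho 0 0 - rho 1 1).
Proof.
rewrite /bloch3 mxtrace2 !mxE !sum_ord2 /sigma_z !mxE /=.
by rewrite !mul0r mul1r addr0 add0r mulN1r.
Qed.

Lemma density2_diag (rho : 'M[C]_2) : density rho -> exists r : R,
  [/\ rho 0 0 = (r%:C)%C, rho 1 1 = ((1 - r)%:C)%C, 0 <= r <= 1 & bloch3 rho = 2 * r - 1].
Proof.
move=> [hp htr]; have [h00 h11] := psd2_diag_ge0 hp.
have [e0 g0] := ge0_complexE h00; have [e1 g1] := ge0_complexE h11.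
move: (complex.Re (rho 0 0)) (complex.Re (rho 1 1)) e0 e1 g0 g1 => r s e0 e1 g0 g1.
have rs : r + s = 1 by move: htr; rewrite mxtrace2 e0 e1 => /(congr1 (@complex.Re R)).
exists r; split.
- exact: e0.
- by rewrite e1 (_ : s = 1 - r) //; lra.
- by apply/andP; split; lra.
by rewrite bloch3E e0 e1 /=; lra.
Qed.

Lemma bloch3_bound (rho : 'M[C]_2) : density rho -> -1 <= bloch3 rho <= 1.
Proof. by move=> /density2_diag[r [_ _ /andP[? ?] ->]]; apply/andP; split; lra. Qed.

Lemma bloch3_mul_ge (rho omega : 'M[C]_2) : density rho -> density omega ->
  -1 <= bloch3 rho * bloch3 omega.
Proof. by move=> /bloch3_bound/andP[? ?] /bloch3_bound/andP[? ?]; nra. Qed.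

Lemma CzE (i j k l : 'I_2) : Cz R (mxtens_index (i, j)) (mxtens_index (k, l)) =
  if (i == k) && (j == l) then (if i == j then 0 else 4) else 0.
Proof.
rewrite /Cz; set X := (_ - _); set s := fun i : 'I_2 => if i == 0 then 1 else -1 : C.
have XE i' j' k' l' : X (mxtens_index (i', j')) (mxtens_index (k', l')) =
    ((i' == k') && (j' == l'))%:R * (s i' - s j').
  rewrite mxE [X in _ + X]mxE !tensmxE !mxE /s.
  by case: (ord2P i') => ->; case: (ord2P j') => ->; case: (ord2P k') => ->;
    case: (ord2P l') => ->; rewrite /=; ring.
rewrite [LHS]/= mxE sum_mxtens_index !sum_ord2 !XE /s.
by case: (ord2P i) => ->; case: (ord2P j) => ->; case: (ord2P k) => ->;
  case: (ord2P l) => ->; rewrite /=; ring.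
Qed.

Local Notation cost P := (complex.Re (\tr (P *m Cz R))).

Lemma mxtrace_mulCz (P : 'M[C]_(2 * 2)) : \tr (P *m Cz R) =
  4 * (P (mxtens_index (0, 1)) (mxtens_index (0, 1))
       + P (mxtens_index (1, 0)) (mxtens_index (1, 0))).
Proof.
rewrite /mxtrace sum_mxtens_index !sum_ord2 !mxE !sum_mxtens_index !sum_ord2 !CzE /=.
ring.
Qed.

Lemma couplings_tens (rho omega : 'M[C]_2) : density rho -> density omega ->
  couplings rho omega (omega *t rho^T).
Proof.
move=> [hr tr] [hw tw]; rewrite mxtrace2 in tr; rewrite mxtrace2 in tw; split; [split|split].
- exact: psd_tensmx hw (psd_trmx hr).
- rewrite /mxtrace sum_mxtens_index !sum_ord2 !tensmxE !mxE.
  transitivity ((omega 0 0 + omega 1 1) * (rho 0 0 + rho 1 1)); first ring.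
  by rewrite tr tw mulr1.
- apply/matrixP => i k; rewrite mxE sum_ord2 !tensmxE !mxE.
  by rewrite -mulrDr tr mulr1.
- apply/matrixP => j l; rewrite mxE sum_ord2 !tensmxE.
  by rewrite -mulrDl tw mul1r.
Qed.

Lemma cost_tens (rho omega : 'M[C]_2) : density rho -> density omega ->
  cost (omega *t rho^T) = 2 - 2 * bloch3 rho * bloch3 omega.
Proof.
move=> /density2_diag[b [r0 r1 _ ->]] /density2_diag[a [w0 w1 _ ->]].
rewrite mxtrace_mulCz !tensmxE !mxE r0 r1 w0 w1 /=.
ring.
Qed.

Lemma coupling_cost (rho omega : 'M[C]_2) P : couplings rho omega P ->
  exists p : R, [/\ 0 <= p, p <= complex.Re (omega 0 0), p <= complex.Re (rho 0 0)
    & cost P = 4 * (complex.Re (omega 0 0) + complex.Re (rho 0 0) - 2 * p)].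
Proof.
move=> [[hP _] [hw hr]].
have diagP i j := ge0_complexE (psd_diag_ge0 (mxtens_index (i, j)) hP).
have [e00 g00] := diagP 0 0; have [e01 g01] := diagP 0 1; have [e10 g10] := diagP 1 0.
have -> : omega 0 0 = P (mxtens_index (0, 0)) (mxtens_index (0, 0))
    + P (mxtens_index (0, 1)) (mxtens_index (0, 1)) by rewrite -hw mxE sum_ord2.
have -> : rho 0 0 = P (mxtens_index (0, 0)) (mxtens_index (0, 0))
    + P (mxtens_index (1, 0)) (mxtens_index (1, 0)).
  by move: hr => /matrixP/(_ 0 0); rewrite !mxE sum_ord2.
exists (complex.Re (P (mxtens_index (0, 0)) (mxtens_index (0, 0)))).
rewrite mxtrace_mulCz e00 e01 e10 /=; split; lra.
Qed.

Lemma Dz2_ge0 (rho omega : 'M[C]_2) : density rho -> density omega -> 0 <= Dz2 rho omega.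
Proof.
move=> hr hw; apply: lb_le_inf.
  by exists (cost (omega *t rho^T)), (omega *t rho^T) => //; apply: couplings_tens.
by move=> _ [P /coupling_cost[p [? ? ? ->]] <-]; lra.
Qed.

Lemma Dz2_le (rho omega : 'M[C]_2) : density rho -> density omega ->
  Dz2 rho omega <= 2 - 2 * bloch3 rho * bloch3 omega.
Proof.
move=> hr hw; rewrite -cost_tens //; apply: ge_inf; last first.
  by exists (omega *t rho^T) => //; apply: couplings_tens.
by exists 0 => _ [P /coupling_cost[p [? ? ? ->]] <-]; lra.
Qed.

Lemma Dz2_eq4 (rho omega : 'M[C]_2) : density rho -> density omega ->
  bloch3 rho * bloch3 omega = -1 -> Dz2 rho omega = 4.
Proof.
move=> hr hw hb.
have le4 : Dz2 rho omega <= 4 by rewrite (le_trans (Dz2_le hr hw)) // -mulrA hb; lra.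
apply/eqP; rewrite eq_le le4 /=.
have [b [r0 _ /andP[? ?] eb]] := density2_diag hr.
have [a [w0 _ /andP[? ?] ea]] := density2_diag hw.
rewrite eb ea in hb.
(* the two populations are 0 and 1, which forces [p = 0] in every coupling *)
have [ab0 ab1] : a * b = 0 /\ a + b = 1 by split; nra.
apply: lb_le_inf.
  by exists (cost (omega *t rho^T)), (omega *t rho^T) => //; apply: couplings_tens.
by move=> y [P /coupling_cost[p]]; rewrite r0 w0 /= => -[? ? ? ->] <-; nra.
Qed.

Lemma proj_upE : [/\ proj_up R 0 0 = 1, proj_up R 0 1 = 0, proj_up R 1 0 = 0 & proj_up R 1 1 = 0].
Proof.
rewrite /proj_up /sigma_z !mxE /= !(addr0, mulr0, subrr); split => //.
by rewrite -mulr2n mulVf ?pnatr_eq0.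
Qed.

Lemma proj_downE :
  [/\ proj_down R 0 0 = 0, proj_down R 0 1 = 0, proj_down R 1 0 = 0 & proj_down R 1 1 = 1].
Proof.
rewrite /proj_down /sigma_z !mxE /= !(subr0, oppr0, addr0, mulr0, subrr, opprK); split => //.
by rewrite -mulr2n mulVf ?pnatr_eq0.
Qed.

Lemma density_proj_up : density (proj_up R).
Proof.
have [e00 e01 e10 e11] := proj_upE; split; last by rewrite mxtrace2 e00 e11 addr0.
move=> v; rewrite quad_formE !sum_ord2 e00 e01 e10 e11 !(mulr0, mul0r, addr0, mulr1).
by rewrite mulrC mul_conjC_ge0.
Qed.

Lemma density_proj_down : density (proj_down R).
Proof.
have [e00 e01 e10 e11] := proj_downE; split; last by rewrite mxtrace2 e00 e11 add0r.
move=> v; rewrite quad_formE !sum_ord2 e00 e01 e10 e11 !(mulr0, mul0r, addr0, add0r, mulr1).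
by rewrite mulrC mul_conjC_ge0.
Qed.

Lemma bloch3_proj_up : bloch3 (proj_up R) = 1.
Proof. by have [e00 _ _ e11] := proj_upE; rewrite bloch3E e00 e11 subr0. Qed.

Lemma bloch3_proj_down : bloch3 (proj_down R) = -1.
Proof. by have [e00 _ _ e11] := proj_downE; rewrite bloch3E e00 e11 sub0r. Qed.

Lemma density_bloch3_eq1 (rho : 'M[C]_2) : density rho -> bloch3 rho = 1 -> rho = proj_up R.
Proof.
move=> hr hb; have [r [e0 e1 _ er]] := density2_diag hr.
have r1 : r = 1 by lra.
rewrite r1 subrr in e0 e1.
have o01 : rho 0 1 = 0 by apply: psd2_offdiag_eq0 hr.1 _; rewrite e1 mulr0.
have [u00 u01 u10 u11] := proj_upE.
by apply: mx2_eq; rewrite ?(psd2_adj hr.1) ?e0 ?e1 ?o01 ?u00 ?u01 ?u10 ?u11 ?conjC0.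
Qed.

Lemma density_bloch3_eqN1 (rho : 'M[C]_2) :
  density rho -> bloch3 rho = -1 -> rho = proj_down R.
Proof.
move=> hr hb; have [r [e0 e1 _ er]] := density2_diag hr.
have r0 : r = 0 by lra.
rewrite r0 subr0 in e0 e1.
have o01 : rho 0 1 = 0 by apply: psd2_offdiag_eq0 hr.1 _; rewrite e0 mul0r.
have [d00 d01 d10 d11] := proj_downE.
by apply: mx2_eq; rewrite ?(psd2_adj hr.1) ?e0 ?e1 ?o01 ?d00 ?d01 ?d10 ?d11 ?conjC0.
Qed.

Lemma bloch3_mul_eqN1 (rho omega : 'M[C]_2) : density rho -> density omega ->
  bloch3 rho * bloch3 omega = -1 <->
  (rho = proj_up R /\ omega = proj_down R) \/ (rho = proj_down R /\ omega = proj_up R).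
Proof.
move=> hr hw; split => [hb|[[-> ->]|[-> ->]]]; last 2 first.
- by rewrite bloch3_proj_up bloch3_proj_down mul1r.
- by rewrite bloch3_proj_up bloch3_proj_down mulr1.
have /andP[? ?] := bloch3_bound hr; have /andP[? ?] := bloch3_bound hw.
have : (bloch3 rho - 1) * (bloch3 rho + 1) = 0.
  have hy2 : bloch3 omega ^+ 2 <= 1 by nra.
  have : (bloch3 rho * bloch3 omega) ^+ 2 = 1 by rewrite hb; ring.
  by nra.
move/eqP; rewrite mulf_eq0 => /orP[] /eqP h; [left|right]; split.
- by apply: density_bloch3_eq1 => //; lra.
- by apply: density_bloch3_eqN1 => //; nra.
- by apply: density_bloch3_eqN1 => //; lra.
- by apply: density_bloch3_eq1 => //; nra.
Qed.

Lemma sqrtr4 : Num.sqrt (4 : R) = 2.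
Proof. by rewrite (_ : 4 = 2 ^+ 2) ?sqrtr_sqr ?ger0_norm // expr2; ring. Qed.

Lemma Dz_le2 (rho omega : 'M[C]_2) : density rho -> density omega -> Dz rho omega <= 2.
Proof.
move=> hr hw; rewrite /Dz -sqrtr4 ler_sqrt //.
by have := bloch3_mul_ge hr hw; have := Dz2_le hr hw; lra.
Qed.

Lemma Dz_eq2 (rho omega : 'M[C]_2) : density rho -> density omega ->
  Dz rho omega = 2 <-> bloch3 rho * bloch3 omega = -1.
Proof.
move=> hr hw; split => [hD|hb]; last by rewrite /Dz Dz2_eq4 // sqrtr4.
have hD2 : Dz2 rho omega = 4.
  by rewrite -(sqr_sqrtr (Dz2_ge0 hr hw)) -/(Dz rho omega) hD expr2; ring.
by have := bloch3_mul_ge hr hw; have := Dz2_le hr hw; rewrite hD2; lra.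
Qed.
End Qubit.

Theorem mainTheorem4 (R : realType) :
  (forall rho omega : 'M[R[i]]_2, density rho -> density omega ->
     Dz2 rho omega <= 2 - 2 * bloch3 rho * bloch3 omega /\
     2 - 2 * bloch3 rho * bloch3 omega <= 4) /\
  (forall rho omega : 'M[R[i]]_2, density rho -> density omega ->
     (Dz rho omega = 2 <->
      (rho = proj_up R /\ omega = proj_down R) \/
      (rho = proj_down R /\ omega = proj_up R))) /\
  sup [set d : R | exists rho omega : 'M[R[i]]_2,
          density rho /\ density omega /\ d = Dz rho omega] = 2.
Proof.
have attained : Dz (proj_up R) (proj_down R) = 2.
  by apply/Dz_eq2; rewrite ?bloch3_proj_up ?bloch3_proj_down ?mul1r //;
    [exact: density_proj_up | exact: density_proj_down].
split; [|split].
- move=> rho omega hr hw; split; first exact: Dz2_le.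
  by have := bloch3_mul_ge hr hw; lra.
- by move=> rho omega hr hw; apply: iff_trans (Dz_eq2 hr hw) (bloch3_mul_eqN1 hr hw).
set S := [set d : R | _].
have S2 : S 2.
  exists (proj_up R), (proj_down R).
  by split; [exact: density_proj_up | split; [exact: density_proj_down | rewrite attained]].
have ubS : ubound S 2 by move=> _ [rho [omega [hr [hw ->]]]]; exact: Dz_le2.
by apply/eqP; rewrite eq_le ge_sup ?ub_le_sup //; exists 2.
Qed.
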